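(* Let $\beta\subset\mathcal B$ be such that the $\beta$-state $\Sigma_\beta$ is not contradictory. If $\Sigma_\beta$ is solvable, then $C_\beta^M$ is an affine space of dimension \[\dim C_\beta^M=\#\{\text{relevant pairs that are vertices of }\Sigma_\beta\}-\#\{\text{relevant triples that are vertices of }\Sigma_\beta\}.\]
   Context: Let $Q$ be a quiver with finite $Q_0,Q_1$, $M$ a finite-dimensional complex representation with ordered basis $\mathcal B=\bigcup_p\mathcal B_p$ (bases $\mathcal B_p$ of $M_p$, total order on $\mathcal B$); $M_v(i)=\sum_j\mu_{v,i,j}j$ for $v:p\to q$, $i\in\mathcal B_p$; coefficient quiver $\Gamma$ with vertices $\mathcal B$ and arrows $(v,i,j)$ with $\mu_{v,i,j}\ne0$, natural map $F:\Gamma\to Q$. Schubert cells: identify $M$ with $\mathbb C^d$ via $\mathcal B$ and subrepresentations $N$ with $\bigoplus_pN_p$. For $|\beta|=e$, $\Delta_\beta(V)$ is the Plücker coordinate (minor with rows $\beta$ of a matrix whose columns span $V$); $\beta\le\beta'$ iff the $l$-th smallest element of $\beta$ is $\le$ that of $\beta'$ for all $l$; $C_\beta(d)=\{V:\Delta_\beta(V)\ne0,\ \Delta_{\beta'}(V)=0\ \forall\beta'>\beta\}$; $C_\beta^M$ is the variety of subrepresentations of $M$ whose underlying subspace lies in $C_\beta(d)$. Schubert system: $E(v,t,s)=\sum_{(v,s',t')\in\Gamma_1}\mu_{v,s',t'}w_{t,t'}w_{s',s}-\sum_{(v,s',t)\in\Gamma_1}\mu_{v,s',t}w_{s',s}$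 for $v:p\to q$, $s\in F^{-1}(p)$, $t\in F^{-1}(q)$. Relevant pairs $\mathrm{Rel}^2=\{(i,j):F(i)=F(j),i\le j\}$; relevant triples $\mathrm{Rel}^3$ = such $(v,t,s)$ with some $(v,s',t')\in\Gamma_1$, $s\ge s'$, $t\le t'$. $E(v,t,s)$ is a polynomial in $w_{i,j}$, $(i,j)\in\mathrm{Rel}^2$ (other variables set to $0$). $\Sigma$: graph on $\mathrm{Rel}^2\sqcup\mathrm{Rel}^3$, edge $\{(i,j),(v,t,s)\}$ iff $w_{i,j}$ occurs in $E(v,t,s)$; links $\lambda=((v,t,s),S)$ whenever $\prod_{(i,j)\in S}w_{i,j}$ occurs in $E(v,t,s)$ with nonzero coefficient $\mu_\lambda$. A partial evaluation is a partial function $\mathrm{ev}:\mathrm{Rel}^2\dashrightarrow\mathbb C$ such that for each triple $(v,t,s)$ and neighbour $(k,l)$: if all other neighbours are in the domain then so is $(k,l)$ and $\sum_{\lambda=((v,t,s),S)}\mu_\lambda\prod_S\mathrm{ev}(i,j)=0$. $f_\beta(i,j)=1$ if $i=j\in\beta$, $0$ if $i\in\beta,i\ne j$, $0$ if $j\notin\beta$, undefined otherwise. $\Sigma_\beta$ is contradictory if no partial evaluation extends $f_\beta$; otherwise $\mathrm{ev}_\beta$ is the unique minimal one (w.r.t. extension). $\beta$-state: for $\lambda=((v,t,s),S)$, $\mu_{\beta,\lambda}=\sum\mu_{\lambda'}\prod_{(i,j)\in S'\cap\mathrm{dom}\,\mathrm{ev}_\beta}\mathrm{ev}_\beta(i,j)$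 over links $\lambda'=((v,t,s),S')$ of $\Sigma$ with $S'\setminus\mathrm{dom}\,\mathrm{ev}_\beta=S$; $\Sigma_\beta$ has links the $\lambda$ with $\mu_{\beta,\lambda}\ne0$ (weight $\mu_{\beta,\lambda}$), vertices the relevant pairs outside $\mathrm{dom}\,\mathrm{ev}_\beta$ and the triples that are tips of its links, edges the edges $\{\tau,\pi\}$ of $\Sigma$ with $\pi\in S$ for a link $(\tau,S)$ of $\Sigma_\beta$. Systems: a system is a bipartite graph whose vertices are coloured ''pairs'' and ''triples'', with a set of links $(\tau,S)$ ($\tau$ a triple, $S$ a set of pairs adjacent to $\tau$; $S$ may be empty) with nonzero weights; $\Sigma_\beta$ is a system. An edge $\{\tau,\pi\}$ is simply linked if $(\tau,\{\pi\})$ is a link and $\{\tau,\pi\}$ is a leg (i.e. $\pi\in S$) of no other link $(\tau,S)$. A solution is an orientation of all edges such that (S1) every triple has exactly one edge oriented away from it, and this edge is simply linked; (S2) every pair has at most one edge oriented towards it; (S3) there are no oriented cycles. The system is solvable if it has a solution. *)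

From HB Require Import structures.
From mathcomp Require Import all_boot all_order all_algebra.
From mathcomp Require Import reals.
From mathcomp Require Export complex.
Set Implicit Arguments. Unset Strict Implicit. Unset Printing Implicit Defensive.
Import Order.TTheory GRing.Theory Num.Theory.
Local Open Scope ring_scope.

Inductive polyfun (C : fieldType) (I : finType) : ((I -> C) -> C) -> Prop :=
 | pf_const (c : C) : polyfun (fun _ => c)
 | pf_var (i : I) : polyfun (fun x => x i)
 | pf_add f g : polyfun f -> polyfun g -> polyfun (fun x => f x + g x)
 | pf_mul f g : polyfun f -> polyfun g -> polyfun (fun x => f x * g x)
 | pf_ext f g : polyfun f -> (forall x, f x = g x) -> polyfun g.

Section Schubert.
Variables (C : fieldType) (Q0 Q1 : finType) (src tgt : Q1 -> Q0).
(* The ordered basis B is identified with 'I_d (with its natural order);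
   F i is the vertex p with i in B_p; M_v(i) = sum_j mu v i j * j. *)
Variables (d : nat) (F : 'I_d -> Q0) (mu : Q1 -> 'I_d -> 'I_d -> C).

Definition pairT := ('I_d * 'I_d)%type.
(* a triple (v,t,s) is encoded as ((v,t),s) *)
Definition tripleT := (Q1 * 'I_d * 'I_d)%type.

Definition Gamma1 (v : Q1) (i j : 'I_d) : bool :=
  [&& F i == src v, F j == tgt v & mu v i j != 0].

Definition mu_eff (v : Q1) (i j : 'I_d) : C :=
  if (F i == src v) && (F j == tgt v) then mu v i j else 0.

Definition rel2 (p : pairT) : bool := (F p.1 == F p.2) && (p.1 <= p.2)%N.

Definition rel3 (tau : tripleT) : bool :=
  let: (v, t, s) := tau in
  [&& F s == src v, F t == tgt v &
      [exists s' : 'I_d, exists t' : 'I_d,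
          [&& Gamma1 v s' t', (s' <= s)%N & (t <= t')%N]]].

(* monomials in the variables w_{i,j} (exponents <= 2 suffice: E has degree <= 2) *)
Definition mono := {ffun pairT -> 'I_3}.
Definition mon1 (p : pairT) : mono := [ffun x => inord (x == p)].
Definition mon2 (p q : pairT) : mono := [ffun x => inord ((x == p) + (x == q))%N].

(* coefficient of the monomial m in E(v,t,s); variables w_{i,j} with (i,j)
   not relevant are set to 0 *)
Definition coefE (tau : tripleT) (m : mono) : C :=
  let: (v, t, s) := tau in
  \sum_(s' : 'I_d) \sum_(t' : 'I_d)
     (if [&& Gamma1 v s' t', rel2 (t, t'), rel2 (s', s) & m == mon2 (t, t') (s', s)]
      then mu v s' t' else 0)
  - \sum_(s' : 'I_d)
     (if [&& Gamma1 v s' t, rel2 (s', s) & m == mon1 (s', s)] then mu v s' t else 0).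

(* links of Sigma: (tau, S) with S the monomial prod_{S} w, nonzero coefficient *)
Definition link (tau : tripleT) (m : mono) : bool := rel3 tau && (coefE tau m != 0).

Definition edge (tau : tripleT) (p : pairT) : bool :=
  [&& rel3 tau, rel2 p & [exists m, link tau m && (0 < m p)%N]].

Definition pevT := pairT -> option C.

Definition evalE (ev : pevT) (tau : tripleT) : C :=
  \sum_(m : mono) coefE tau m * \prod_(p : pairT) (odflt 0 (ev p)) ^+ m p.

Definition partial_eval (ev : pevT) : Prop :=
  (forall p, isSome (ev p) -> rel2 p) /\
  (forall tau p, rel3 tau -> edge tau p ->
     (forall p', edge tau p' -> p' != p -> isSome (ev p')) ->
     isSome (ev p) /\ evalE ev tau = 0).

Definition f_beta (beta : {set 'I_d}) : pevT := fun p =>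
  if ~~ rel2 p then None
  else if p.1 \in beta then Some (if p.1 == p.2 then 1 else 0)
  else if p.2 \notin beta then Some 0
  else None.

Definition extends (ev1 ev2 : pevT) : Prop :=
  forall p, isSome (ev1 p) -> ev2 p = ev1 p.

Definition contradictory (beta : {set 'I_d}) : Prop :=
  ~ exists ev, partial_eval ev /\ extends (f_beta beta) ev.

(* ev is the unique minimal (= least, the poset having finite height)
   partial evaluation extending f_beta *)
Definition is_ev_beta (beta : {set 'I_d}) (ev : pevT) : Prop :=
  [/\ partial_eval ev, extends (f_beta beta) ev &
      forall ev', partial_eval ev' -> extends (f_beta beta) ev' -> extends ev ev'].

Definition muB (ev : pevT) (tau : tripleT) (S : mono) : C :=
  \sum_(m : mono | link tau m &&
          [forall p, if isSome (ev p) then (S p == 0 :> nat) else (m p == S p)])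
     coefE tau m * \prod_(p : pairT | isSome (ev p)) (odflt 0 (ev p)) ^+ m p.

Definition blink (ev : pevT) (tau : tripleT) (S : mono) : bool :=
  rel3 tau && (muB ev tau S != 0).

Definition bpair (ev : pevT) (p : pairT) : bool := rel2 p && ~~ isSome (ev p).
Definition btriple (ev : pevT) (tau : tripleT) : bool := [exists S, blink ev tau S].
Definition bedge (ev : pevT) (tau : tripleT) (p : pairT) : bool :=
  edge tau p && [exists S, blink ev tau S && (0 < S p)%N].

Definition simply_linked (ev : pevT) (tau : tripleT) (p : pairT) : bool :=
  blink ev tau (mon1 p) &&
  [forall S, (blink ev tau S && (0 < S p)%N) ==> (S == mon1 p)].

(* orientation: out tau p = true iff the edge {tau,p} is oriented tau -> p *)
Definition arc (ev : pevT) (out : tripleT -> pairT -> bool)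
    (x y : (pairT + tripleT)%type) : bool :=
  match x, y with
  | inr tau, inl p => bedge ev tau p && out tau p
  | inl p, inr tau => bedge ev tau p && ~~ out tau p
  | _, _ => false
  end.

Definition is_solution (ev : pevT) (out : tripleT -> pairT -> bool) : Prop :=
  [/\
      (forall tau, btriple ev tau ->
         exists p, [/\ bedge ev tau p, out tau p, simply_linked ev tau p &
                      forall p', bedge ev tau p' -> out tau p' -> p' = p]),
      (forall p tau1 tau2, bedge ev tau1 p -> out tau1 p ->
                           bedge ev tau2 p -> out tau2 p -> tau1 = tau2) &
      (forall x y, arc ev out x y -> ~~ connect (arc ev out) y x)].

Definition solvable (ev : pevT) : Prop := exists out, is_solution ev out.

(* Pluecker coordinate: rows of X : 'M_(e,d) span V (row convention);
   minor on the columns in b (listed increasingly) *)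
Definition Pl (e : nat) (X : 'M[C]_(e, d)) (b : {set 'I_d}) : C :=
  \det (\matrix_(k < e, l < e) oapp (X k) 0 (onth (enum b) l)).

Definition bnth (b : {set 'I_d}) (l : nat) : nat :=
  nth 0%N (map (@nat_of_ord d) (enum b)) l.

Definition ble (b b' : {set 'I_d}) : bool :=
  (#|b| == #|b'|) && [forall l : 'I_#|b|, bnth b l <= bnth b' l]%N.
Definition blt (b b' : {set 'I_d}) : bool := ble b b' && (b != b').

Definition projM (p : Q0) : 'M[C]_d := \matrix_(i, j) ((i == j) && (F i == p))%:R.
Definition actM (v : Q1) : 'M[C]_d := \matrix_(i, j) mu_eff v i j.

Definition subrep (e : nat) (X : 'M[C]_(e, d)) : Prop :=
  (forall p, (X *m projM p <= X)%MS) /\ (forall v, (X *m actM v <= X)%MS).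

(* X (up to row equivalence) is a point of C_beta^M *)
Definition cellM (b : {set 'I_d}) (X : 'M[C]_(#|b|, d)) : Prop :=
  [/\ Pl X b != 0, (forall b', blt b b' -> Pl X b' = 0) & subrep X].

(* affine coordinates Delta_{b'}/Delta_b on the chart {Delta_b <> 0} *)
Definition ratios (b : {set 'I_d}) (X : 'M[C]_(#|b|, d)) : {set 'I_d} -> C :=
  fun b' => if #|b'| == #|b| then Pl X b' / Pl X b else 0.

(* S (a row-equivalence-closed set of points of the chart {Delta_b <> 0} of the
   Grassmannian) is isomorphic, as a variety, to affine n-space *)
Definition affine_of_dim (b : {set 'I_d}) (S : 'M[C]_(#|b|, d) -> Prop) (n : nat) : Prop :=
  exists (phi : ('I_n -> C) -> 'M[C]_(#|b|, d)) (psi : 'I_n -> ({set 'I_d} -> C) -> C),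
    [/\ forall i j, polyfun (fun x => phi x i j),
        forall k, polyfun (psi k),
        forall x, S (phi x),
        forall x k, psi k (ratios (phi x)) = x k &
        forall X, S X -> (phi (fun k => psi k (ratios X)) == X)%MS].

End Schubert.

From Pilot Require Import Defs.
From HB Require Import structures.
From mathcomp Require Import all_boot all_order all_algebra.
From mathcomp Require Import reals complex.
From mathcomp Require Import perm ring.
Set Implicit Arguments. Unset Strict Implicit. Unset Printing Implicit Defensive.
Import GRing.Theory.
Local Open Scope ring_scope.

(* Normalise a point of the cell so that its columns in [beta] form the
   identity; it is then described by the entries w_{i,j}, i.e. by the relevant
   pairs, subject to the Schubert system, and ev_beta fixes some of them.  A
   solution of Sigma_beta orients every remaining equation towards a simply
   linked variable, which the equation determines linearly in terms of
   variables of strictly smaller height (there are no oriented cycles).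
   Back-substitution then expresses all variables polynomially in the pairs
   targeted by no triple, and these free coordinates are recovered from the
   cell as ratios of Pluecker coordinates of the exchanged sets i |: beta :\ j.
   Triples and targeted pairs correspond bijectively, whence the dimension. *)

Section PolynomialFunctions.
Variables (C : fieldType) (I : finType).

Lemma polyfun_sum (J : Type) (r : seq J) (P : pred J) (f : J -> (I -> C) -> C) :
  (forall j, polyfun (f j)) -> polyfun (fun x => \sum_(j <- r | P j) f j x).
Proof.
move=> pf_f; elim: r => [|j r IHr].
  by apply: (pf_ext (pf_const _ 0)) => x; rewrite big_nil.
case Pj: (P j).
  by apply: (pf_ext (pf_add (pf_f j) IHr)) => x; rewrite big_cons Pj.
by apply: (pf_ext IHr) => x; rewrite big_cons Pj.
Qed.

Lemma polyfun_prod (J : Type) (r : seq J) (P : pred J) (f : J -> (I -> C) -> C) :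
  (forall j, polyfun (f j)) -> polyfun (fun x => \prod_(j <- r | P j) f j x).
Proof.
move=> pf_f; elim: r => [|j r IHr].
  by apply: (pf_ext (pf_const _ 1)) => x; rewrite big_nil.
case Pj: (P j).
  by apply: (pf_ext (pf_mul (pf_f j) IHr)) => x; rewrite big_cons Pj.
by apply: (pf_ext IHr) => x; rewrite big_cons Pj.
Qed.

Lemma polyfun_exp (f : (I -> C) -> C) n : polyfun f -> polyfun (fun x => f x ^+ n).
Proof.
move=> pf_f; elim: n => [|n IHn].
  by apply: (pf_ext (pf_const _ 1)) => x; rewrite expr0.
by apply: (pf_ext (pf_mul pf_f IHn)) => x; rewrite exprS.
Qed.

End PolynomialFunctions.

Lemma exists_neq0_sumr (V : nmodType) (T : finType) (P : pred T) (f : T -> V) :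
  \sum_(i | P i) f i != 0 -> exists i, P i && (f i != 0).
Proof.
case: (pickP (fun i => P i && (f i != 0))) => [i Pfi _|none]; first by exists i.
rewrite big1 ?eqxx // => i Pi; move: (none i); rewrite Pi /=.
by move/negbFE/eqP.
Qed.

Lemma sum_if_eq (R : pzSemiRingType) (T : finType) (m0 : T) (c : bool) (a : R) (G : T -> R) :
  \sum_(m : T) (if c && (m == m0) then a else 0) * G m = if c then a * G m0 else 0.
Proof.
case: c => /=; last by rewrite big1 // => m _; rewrite mul0r.
rewrite (bigD1 m0) //= eqxx big1 ?addr0 // => m /negbTE ->.
by rewrite mul0r.
Qed.

Lemma prod_expr_eq (R : comPzSemiRingType) (T : finType) (W : T -> R) a :
  \prod_(p : T) W p ^+ (p == a) = W a.
Proof.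
rewrite (bigD1 a) //= eqxx expr1 big1 ?mulr1 // => p /negbTE ->.
by rewrite expr0.
Qed.

Lemma pick_enum_val (T : finType) (A : {set T}) (k : 'I_#|A|) :
  [pick k' : 'I_#|A| | enum_val k' == enum_val k] = Some k.
Proof.
case: pickP => [k' /eqP /enum_val_inj -> //|none].
by move: (none k); rewrite eqxx.
Qed.

Lemma pick_enum_val_notin (T : finType) (A : {set T}) x :
  x \notin A -> [pick k : 'I_#|A| | enum_val k == x] = None.
Proof. by move=> Nx; case: pickP => // k /eqP kx; move: (enum_valP k); rewrite kx (negbTE Nx). Qed.

Section SchubertSystem.
Variables (C : fieldType) (Q0 Q1 : finType) (src tgt : Q1 -> Q0).
Variables (d : nat) (F : 'I_d -> Q0) (mu : Q1 -> 'I_d -> 'I_d -> C).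

Local Notation coefE := (Defs.coefE src tgt F mu).
Local Notation rel2 := (Defs.rel2 F).
Local Notation rel3 := (Defs.rel3 src tgt F mu).
Local Notation Gamma1 := (Defs.Gamma1 src tgt F mu).

Definition evalW (W : pairT d -> C) (tau : tripleT Q1 d) : C :=
  \sum_(m : mono d) coefE tau m * \prod_(p : pairT d) W p ^+ m p.

Lemma mon1E (a p : pairT d) : mon1 a p = (p == a) :> nat.
Proof. by rewrite ffunE inordK //; case: (p == a). Qed.

Lemma mon2E (a b p : pairT d) : mon2 a b p = ((p == a) + (p == b))%N :> nat.
Proof. by rewrite ffunE inordK //; case: (p == a); case: (p == b). Qed.

Lemma prod_mon1 (W : pairT d -> C) a : \prod_(p : pairT d) W p ^+ mon1 a p = W a.
Proof. by rewrite -[RHS](prod_expr_eq W a); apply: eq_bigr => p _; rewrite mon1E. Qed.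

Lemma prod_mon2 (W : pairT d -> C) a b :
  \prod_(p : pairT d) W p ^+ mon2 a b p = W a * W b.
Proof.
rewrite -(prod_expr_eq W a) -(prod_expr_eq W b) -big_split /=.
by apply: eq_bigr => p _; rewrite mon2E exprD.
Qed.

Lemma evalWE (W : pairT d -> C) v t s :
  evalW W (v, t, s) =
  \sum_(s' : 'I_d) \sum_(t' : 'I_d)
     (if [&& Gamma1 v s' t', rel2 (t, t') & rel2 (s', s)]
      then mu v s' t' * (W (t, t') * W (s', s)) else 0)
  - \sum_(s' : 'I_d)
     (if Gamma1 v s' t && rel2 (s', s) then mu v s' t * W (s', s) else 0).
Proof.
rewrite /evalW /Defs.coefE; cbv beta iota.
under eq_bigr => m _ do rewrite mulrBl.
rewrite sumrB; congr (_ - _).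
  under eq_bigr do rewrite mulr_suml.
  rewrite exchange_big /=; apply: eq_bigr => s' _.
  under eq_bigr do rewrite mulr_suml.
  rewrite exchange_big /=; apply: eq_bigr => t' _.
  under eq_bigr => m _ do rewrite (andbA (rel2 (t, t'))) (andbA (Gamma1 v s' t')).
  by rewrite sum_if_eq prod_mon2.
under eq_bigr do rewrite mulr_suml.
rewrite exchange_big /=; apply: eq_bigr => s' _.
under eq_bigr => m _ do rewrite (andbA (Gamma1 v s' t)).
by rewrite sum_if_eq prod_mon1.
Qed.

Lemma coefE_nonrel3 tau m : ~~ rel3 tau -> coefE tau m = 0.
Proof.
case: tau => [[v t] s] /= Nrel3; rewrite /Defs.coefE; cbv beta iota.
rewrite [X in X - _]big1 ?sub0r ?big1 ?oppr0 // => s' _.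
  case: ifP => // /and3P [/and3P [src_s' tgt_t mu_neq0] /andP [/eqP Fs's le_s's] _].
  case/negP: Nrel3; rewrite /Defs.rel3 -Fs's src_s' tgt_t /=.
  apply/existsP; exists s'; apply/existsP; exists t.
  by rewrite /Defs.Gamma1 src_s' tgt_t mu_neq0 le_s's leqnn.
rewrite big1 // => t' _.
case: ifP => // /and4P [/and3P [src_s' tgt_t' mu_neq0] /andP [/eqP Ftt' le_tt'] /andP [/eqP Fs's le_s's] _].
case/negP: Nrel3; rewrite /Defs.rel3 -Fs's src_s' Ftt' tgt_t' /=.
apply/existsP; exists s'; apply/existsP; exists t'.
by rewrite /Defs.Gamma1 src_s' tgt_t' mu_neq0 le_tt' le_s's.
Qed.

Lemma evalW_nonrel3 W tau : ~~ rel3 tau -> evalW W tau = 0.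
Proof. by move=> Nrel3; rewrite /evalW big1 // => m _; rewrite coefE_nonrel3 // mul0r. Qed.

Lemma coefE_support_rel2 tau m q : coefE tau m != 0 -> (0 < m q)%N -> rel2 q.
Proof.
case: tau => [[v t] s]; rewrite /Defs.coefE; cbv beta iota.
set quad := \sum_(s' < d) _; set lin := \sum_(s' < d) _ => coef_neq0 mq_gt0.
have [quad_neq0|lin_neq0] : quad != 0 \/ lin != 0.
  apply/orP; rewrite -negb_and; apply: contra coef_neq0 => /andP [/eqP -> /eqP ->].
  by rewrite subrr.
- case: (exists_neq0_sumr quad_neq0) => s' /= /exists_neq0_sumr [t' /=].
  case: ifP => [/and4P [_ rel2_tt' rel2_s's /eqP mE] _|]; last by rewrite eqxx.
  move: mq_gt0; rewrite mE mon2E.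
  by case: eqP => [->|_]; case: eqP => [->|_].
- case: (exists_neq0_sumr lin_neq0) => s' /=.
  case: ifP => [/and3P [_ rel2_s's /eqP mE] _|]; last by rewrite eqxx.
  by move: mq_gt0; rewrite mE mon1E; case: eqP => [->|_].
Qed.

End SchubertSystem.

Section BetaState.
Variables (C : fieldType) (Q0 Q1 : finType) (src tgt : Q1 -> Q0).
Variables (d : nat) (F : 'I_d -> Q0) (mu : Q1 -> 'I_d -> 'I_d -> C).
Variable ev : pevT C d.

Local Notation coefE := (Defs.coefE src tgt F mu).
Local Notation rel2 := (Defs.rel2 F).
Local Notation rel3 := (Defs.rel3 src tgt F mu).
Local Notation link := (Defs.link src tgt F mu).
Local Notation edge := (Defs.edge src tgt F mu).
Local Notation evalW := (evalW src tgt F mu).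
Local Notation muB := (Defs.muB src tgt F mu ev).
Local Notation blink := (Defs.blink src tgt F mu ev).
Local Notation bedge := (Defs.bedge src tgt F mu ev).
Local Notation btriple := (Defs.btriple src tgt F mu ev).

Definition undef_part (m : mono d) : mono d :=
  [ffun p => if isSome (ev p) then ord0 else m p].

Lemma forall_undef_part (m S : mono d) :
  [forall p, if isSome (ev p) then (S p == 0 :> nat) else (m p == S p)] =
  (S == undef_part m).
Proof.
apply/forallP/eqP.
  move=> S_restr; apply/ffunP => p; rewrite ffunE; move: (S_restr p).
  by case: (isSome (ev p)) => /eqP Sp; [apply: val_inj | rewrite Sp].
by move=> -> p; rewrite ffunE; case: (isSome (ev p)).
Qed.

Lemma evalW_state (W : pairT d -> C) tau :
  rel3 tau -> (forall p c, ev p = Some c -> W p = c) ->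
  evalW W tau =
  \sum_(S : mono d) muB tau S * \prod_(p | ~~ isSome (ev p)) W p ^+ S p.
Proof.
move=> rel3_tau W_ev; rewrite /Defs.muB.
under [RHS]eq_bigr => S _ do rewrite big_mkcond mulr_suml /=.
rewrite exchange_big /=; apply: eq_bigr => m _.
under eq_bigr => S _ do rewrite forall_undef_part.
rewrite sum_if_eq /Defs.link rel3_tau /=.
have [->|coef_neq0] := eqVneq (coefE tau m) 0; first by rewrite !mul0r.
rewrite -mulrA; congr (_ * _).
rewrite (bigID (fun p => isSome (ev p))) /=; congr (_ * _).
  by apply: eq_bigr => p; case E: (ev p) => [c|] //= _; rewrite (W_ev _ _ E).
by apply: eq_bigr => p undef_p; rewrite ffunE (negbTE undef_p).
Qed.

Lemma btriple_rel3 tau : btriple tau -> rel3 tau.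
Proof. by case/existsP => S /andP []. Qed.

Lemma blink_support tau S q : blink tau S -> (0 < S q)%N ->
  exists2 m, link tau m & S = undef_part m.
Proof.
case/andP=> _ /exists_neq0_sumr [m /andP [/andP [link_m]]].
by rewrite forall_undef_part => /eqP -> _ _; exists m.
Qed.

Lemma blink_undef tau S q : blink tau S -> (0 < S q)%N -> ev q = None.
Proof.
move=> blink_S Sq_gt0; case: (blink_support blink_S Sq_gt0) => m _ SE.
by move: Sq_gt0; rewrite SE ffunE; case: (ev q).
Qed.

Lemma blink_bedge tau S q : blink tau S -> (0 < S q)%N -> bedge tau q.
Proof.
move=> blink_S Sq_gt0; have undef_q := blink_undef blink_S Sq_gt0.
case: (blink_support blink_S Sq_gt0) => m link_m SE.
have mq_gt0 : (0 < m q)%N by move: Sq_gt0; rewrite SE ffunE undef_q.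
case/andP: (link_m) (blink_S) => rel3_tau coef_neq0 _.
rewrite /Defs.bedge /Defs.edge rel3_tau (coefE_support_rel2 coef_neq0 mq_gt0) /=.
apply/andP; split; apply/existsP.
  by exists m; rewrite link_m.
by exists S; rewrite blink_S.
Qed.

Lemma bedge_undef tau q : bedge tau q -> ev q = None.
Proof. by case/andP => _ /existsP [S /andP [blink_S /(blink_undef blink_S)]]. Qed.

Lemma bedge_rel2 tau q : bedge tau q -> rel2 q.
Proof. by case/andP => /and3P []. Qed.

Definition other_terms (W : pairT d -> C) tau p :=
  \sum_(S : mono d | S != mon1 p) muB tau S *
     \prod_(q | ~~ isSome (ev q)) W q ^+ S q.

Lemma evalW_split (W : pairT d -> C) tau p :
  rel3 tau -> (forall q c, ev q = Some c -> W q = c) -> ev p = None ->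
  evalW W tau = muB tau (mon1 p) * W p + other_terms W tau p.
Proof.
move=> rel3_tau W_ev undef_p; rewrite (evalW_state rel3_tau W_ev) (bigD1 (mon1 p)) //=.
rewrite (bigD1 p) /= ?undef_p // mon1E eqxx expr1 big1 ?mulr1 //.
by move=> q /andP [_ q_neq_p]; rewrite mon1E (negbTE q_neq_p) expr0.
Qed.

Lemma evalW_no_blink (W : pairT d -> C) tau :
  rel3 tau -> ~~ btriple tau -> (forall q c, ev q = Some c -> W q = c) ->
  evalW W tau = 0.
Proof.
move=> rel3_tau Nbtriple W_ev; rewrite (evalW_state rel3_tau W_ev) big1 // => S _.
suff -> : muB tau S = 0 by rewrite mul0r.
apply/eqP; apply: contraNT Nbtriple => muB_neq0.
by apply/existsP; exists S; rewrite /Defs.blink rel3_tau.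
Qed.

Definition is_point (W : pairT d -> C) : Prop :=
  [/\ forall p, ~~ rel2 p -> W p = 0,
      forall p c, ev p = Some c -> W p = c &
      forall tau, rel3 tau -> evalW W tau = 0].

End BetaState.

Section SolvedState.
Variables (C : fieldType) (Q0 Q1 : finType) (src tgt : Q1 -> Q0).
Variables (d : nat) (F : 'I_d -> Q0) (mu : Q1 -> 'I_d -> 'I_d -> C).
Variables (ev : pevT C d) (out : tripleT Q1 d -> pairT d -> bool).
Hypothesis ev_partial : partial_eval src tgt F mu ev.
Hypothesis out_solution : is_solution src tgt F mu ev out.

Local Notation rel2 := (Defs.rel2 F).
Local Notation rel3 := (Defs.rel3 src tgt F mu).
Local Notation evalW := (evalW src tgt F mu).
Local Notation muB := (Defs.muB src tgt F mu ev).
Local Notation blink := (Defs.blink src tgt F mu ev).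
Local Notation bedge := (Defs.bedge src tgt F mu ev).
Local Notation btriple := (Defs.btriple src tgt F mu ev).
Local Notation arc := (Defs.arc src tgt F mu ev out).
Local Notation other_terms := (other_terms src tgt F mu ev).
Local Notation is_point := (is_point src tgt F mu ev).

Definition outgoing tau p := [&& btriple tau, bedge tau p & out tau p].

Lemma outgoing_exists tau : btriple tau -> exists p, outgoing tau p.
Proof.
case: out_solution => S1 _ _ /[dup] btriple_tau /S1 [p [bedge_p out_p _ _]].
by exists p; rewrite /outgoing btriple_tau bedge_p out_p.
Qed.

Lemma outgoing_simply_linked tau p :
  outgoing tau p -> simply_linked src tgt F mu ev tau p.
Proof.
case/and3P; case: out_solution => S1 _ _ /S1 [p0 [_ _ sl_p0 uniq_p0]] bedge_p out_p.
by rewrite (uniq_p0 _ bedge_p out_p).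
Qed.

Lemma outgoing_coef_neq0 tau p : outgoing tau p -> muB tau (mon1 p) != 0.
Proof. by case/outgoing_simply_linked/andP => /andP []. Qed.

Lemma outgoing_fun tau p p' : outgoing tau p -> outgoing tau p' -> p = p'.
Proof.
case/and3P; case: out_solution => S1 _ _ /S1 [p0 [_ _ _ uniq_p0]] bedge_p out_p.
by case/and3P => _ bedge_p' out_p'; rewrite (uniq_p0 _ bedge_p out_p) (uniq_p0 _ bedge_p' out_p').
Qed.

Lemma outgoing_inj tau tau' p : outgoing tau p -> outgoing tau' p -> tau = tau'.
Proof.
case: out_solution => _ S2 _ /and3P [_ bedge_p out_p] /and3P [_ bedge_p' out_p'].
exact: S2 bedge_p out_p bedge_p' out_p'.
Qed.

(* Only the simply linked leg of [tau] carries the outgoing edge, so every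
   other variable of the equation of [tau] has an arc into [tau]. *)
Lemma other_terms_local (W W' : pairT d -> C) tau p : outgoing tau p ->
  (forall q, arc (inl q) (inr tau) -> W q = W' q) ->
  other_terms W tau p = other_terms W' tau p.
Proof.
move=> out_tau_p W_W'; apply: eq_bigr => S S_neq.
have [->|muB_neq0] := eqVneq (muB tau S) 0; first by rewrite !mul0r.
case/and3P: (out_tau_p) => /btriple_rel3 rel3_tau _ _.
have blink_S : blink tau S by rewrite /Defs.blink rel3_tau.
congr (_ * _); apply: eq_bigr => q _.
have [->|Sq_gt0] := posnP (S q); first by rewrite !expr0.
have bedge_q := blink_bedge blink_S Sq_gt0.
congr (_ ^+ _); apply: W_W'; rewrite /= bedge_q; apply/negP => out_q.
have out_tau_q : outgoing tau q.
  by case/and3P: out_tau_p => btriple_tau _ _; apply/and3P.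
have pq := outgoing_fun out_tau_p out_tau_q; subst q.
move: (outgoing_simply_linked out_tau_p).
by case/andP => _ /forallP /(_ S); rewrite blink_S Sq_gt0 (negbTE S_neq).
Qed.

Definition targeted p := [exists tau, outgoing tau p].
Definition free_pairs := [set p | bpair F ev p && ~~ targeted p].
Local Notation n := #|free_pairs|.

Definition fill_step (x : 'I_n -> C) (W : pairT d -> C) (p : pairT d) : C :=
  if ev p is Some c then c else
  if [pick tau | outgoing tau p] is Some tau
  then - (muB tau (mon1 p))^-1 * other_terms W tau p
  else oapp x 0 [pick k : 'I_n | enum_val k == p].

Lemma fill_step_ext x (W W' : pairT d -> C) : W =1 W' -> fill_step x W =1 fill_step x W'.
Proof.
move=> WE p; rewrite /fill_step; case: (ev p) => //; case: pickP => // tau _.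
congr (_ * _); apply: eq_bigr => S _.
by congr (_ * _); apply: eq_bigr => q _; rewrite WE.
Qed.

Definition height p := #|[set y | connect arc y (inl p)]|.

Lemma height_gt0 p : (0 < height p)%N.
Proof. by apply/card_gt0P; exists (inl p); rewrite inE connect0. Qed.

Lemma height_lt q tau p : arc (inl q) (inr tau) -> arc (inr tau) (inl p) ->
  (height q < height p)%N.
Proof.
move=> arc_q arc_p; apply: proper_card; apply/properP; split.
  apply/subsetP => y; rewrite !inE => /connect_trans; apply.
  exact: connect_trans (connect1 arc_q) (connect1 arc_p).
exists (inl p); first by rewrite inE connect0.
rewrite inE; apply/negP => /connect_trans /(_ (connect1 arc_q)).
by case: out_solution => _ _ /(_ _ _ arc_p) /negbTE ->.
Qed.

Lemma fill_step_local x (W W' : pairT d -> C) p :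
  (forall q tau, arc (inl q) (inr tau) -> arc (inr tau) (inl p) -> W q = W' q) ->
  fill_step x W p = fill_step x W' p.
Proof.
move=> W_W'; rewrite /fill_step; case: (ev p) => //.
case: pickP => // tau out_tau_p; congr (_ * _).
apply: other_terms_local => // q arc_q; apply: (W_W' q tau arc_q).
by case/and3P: out_tau_p => _ /= -> ->.
Qed.

(* Arcs strictly increase [height], so after [k] steps [fill_step x] no longer
   changes the pairs of height at most [k]. *)
Lemma iter_fill_step_height x k p (W W' : pairT d -> C) : (height p <= k)%N ->
  iter k (fill_step x) W p = iter k (fill_step x) W' p.
Proof.
elim: k p => [|k IHk] p le_hk; first by move: (height_gt0 p); rewrite ltnNge le_hk.
rewrite !iterS; apply: fill_step_local => q tau arc_q arc_p; apply: IHk.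
by rewrite -ltnS (leq_trans (height_lt arc_q arc_p)).
Qed.

Definition max_height := #|{: (pairT d + tripleT Q1 d)%type}|.

Lemma height_le_max p : (height p <= max_height)%N.
Proof. exact: max_card. Qed.

Definition fill (x : 'I_n -> C) : pairT d -> C := iter max_height (fill_step x) (fun _ => 0).

Lemma fill_step_fill x : fill_step x (fill x) =1 fill x.
Proof.
by move=> p; rewrite /fill -iterS iterSr; apply: iter_fill_step_height; apply: height_le_max.
Qed.

Lemma fill_step_fixed x (W : pairT d -> C) : fill_step x W =1 W -> W =1 fill x.
Proof.
move=> W_fixed.
have iter_fixed k : iter k (fill_step x) W =1 W.
  by elim: k => [|k IHk] p //=; rewrite (fill_step_ext x IHk p).
by move=> p; rewrite -(iter_fixed max_height p); apply: iter_fill_step_height; apply: height_le_max.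
Qed.

Lemma pick_outgoing tau p :
  outgoing tau p -> [pick tau' | outgoing tau' p] = Some tau.
Proof.
move=> out_tau_p; case: pickP => [tau' out_tau'_p|none]; last by rewrite none in out_tau_p.
by rewrite (outgoing_inj out_tau'_p out_tau_p).
Qed.

Lemma pick_free_nonrel2 p : ~~ rel2 p -> [pick k : 'I_n | enum_val k == p] = None.
Proof.
by move=> Nrel2_p; rewrite pick_enum_val_notin // inE /bpair (negbTE Nrel2_p).
Qed.

Lemma outgoing_equation (W : pairT d -> C) tau p :
  (forall q c, ev q = Some c -> W q = c) -> outgoing tau p ->
  (evalW W tau == 0) = (W p == - (muB tau (mon1 p))^-1 * other_terms W tau p).
Proof.
move=> W_ev out_tau_p; have muB_neq0 := outgoing_coef_neq0 out_tau_p.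
case/and3P: (out_tau_p) => /btriple_rel3 rel3_tau /bedge_undef undef_p _.
rewrite (evalW_split rel3_tau W_ev undef_p) addr_eq0 mulNr -mulrN.
by apply/eqP/eqP => [<-|->]; rewrite ?mulKf ?mulVKf.
Qed.

Lemma fill_step_fixed_point x W : fill_step x W =1 W -> is_point W.
Proof.
move=> W_fixed; have W_ev p c : ev p = Some c -> W p = c.
  by move=> ev_p; rewrite -W_fixed /fill_step ev_p.
split=> // [p Nrel2_p|tau rel3_tau].
  rewrite -W_fixed /fill_step; case ev_p: (ev p) => [c|].
    by case: ev_partial => /(_ p); rewrite ev_p (negbTE Nrel2_p) => /(_ isT).
  case: pickP => [tau /and3P [_ /bedge_rel2 rel2_p _]|_]; first by rewrite rel2_p in Nrel2_p.
  by rewrite pick_free_nonrel2.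
have [btriple_tau|Nbtriple] := boolP (btriple tau); last exact: evalW_no_blink rel3_tau Nbtriple W_ev.
case: (outgoing_exists btriple_tau) => p out_tau_p.
apply/eqP; rewrite (outgoing_equation W_ev out_tau_p); apply/eqP.
rewrite -W_fixed /fill_step; case/and3P: (out_tau_p) => _ /bedge_undef -> _.
by rewrite (pick_outgoing out_tau_p).
Qed.

Lemma point_fill_step_fixed x W :
  is_point W -> (forall k, W (enum_val k) = x k) -> fill_step x W =1 W.
Proof.
case=> W_Nrel2 W_ev W_eq W_x p; rewrite /fill_step.
case ev_p: (ev p) => [c|]; first by rewrite (W_ev _ _ ev_p).
case: pickP => [tau out_tau_p|Ntargeted].
  case/and3P: (out_tau_p) => /btriple_rel3 /W_eq /eqP.
  by rewrite (outgoing_equation W_ev out_tau_p) => /eqP ->.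
have [rel2_p|Nrel2_p] := boolP (rel2 p); last by rewrite pick_free_nonrel2 ?W_Nrel2.
have free_p : p \in free_pairs.
  by rewrite inE /bpair rel2_p ev_p /=; apply/existsP => -[tau]; rewrite Ntargeted.
by rewrite -(enum_rankK_in free_p free_p) pick_enum_val W_x.
Qed.

Lemma fill_point x : is_point (fill x).
Proof. exact: fill_step_fixed_point (fill_step_fill x). Qed.

Lemma fill_free x k : fill x (enum_val k) = x k.
Proof.
rewrite -fill_step_fill /fill_step.
have := enum_valP k; rewrite inE => /andP [/andP [_ undef]].
case: (ev (enum_val k)) undef => // _ Ntargeted.
case: pickP => [tau out_tau|_]; last by rewrite pick_enum_val.
by case/existsP: Ntargeted; exists tau.
Qed.

Lemma point_eq_fill x W : is_point W -> (forall k, W (enum_val k) = x k) -> W =1 fill x.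
Proof. by move=> W_point W_x; apply: fill_step_fixed; apply: point_fill_step_fixed. Qed.

Lemma fill_polyfun p : polyfun (fun x : 'I_n -> C => fill x p).
Proof.
rewrite /fill; elim: max_height p => [|k IHk] p /=; first exact: pf_const.
rewrite /fill_step; case: (ev p) => [c|]; first exact: pf_const.
case: pickP => [tau _|_].
  apply: pf_mul (pf_const _ _) _; apply: polyfun_sum => S.
  by apply: pf_mul (pf_const _ _) _; apply: polyfun_prod => q; apply: polyfun_exp.
by case: pickP => [k' _|_] /=; [exact: pf_var | exact: pf_const].
Qed.

(* [outgoing] matches the triples of Sigma_beta bijectively with the targeted pairs. *)
Lemma card_free_pairs :
  #|free_pairs| = (#|[set p | bpair F ev p]| - #|[set tau | btriple tau]|)%N.
Proof.
pose E := [set tp | outgoing tp.1 tp.2].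
have card_btriple : #|[set tau | btriple tau]| = #|E|.
  have -> : [set tau | btriple tau] = fst @: E.
    apply/setP => tau; rewrite inE; apply/idP/imsetP.
      by case/outgoing_exists => p out_tau_p; exists (tau, p); rewrite ?inE.
    by case=> [[tau' p]]; rewrite inE /= => /and3P [btriple_tau _ _] ->.
  rewrite card_in_imset // => [[t1 p1] [t2 p2]]; rewrite !inE /= => out1 out2 E12.
  by move: out1; rewrite E12 => /outgoing_fun /(_ out2) ->.
have card_targeted : #|[set p | targeted p]| = #|E|.
  have -> : [set p | targeted p] = snd @: E.
    apply/setP => p; rewrite inE; apply/existsP/imsetP => [[tau out_tau_p]|].
      by exists (tau, p); rewrite ?inE.
    by case=> [[tau p']]; rewrite inE /= => out_tau_p ->; exists tau.
  rewrite card_in_imset // => [[t1 p1] [t2 p2]]; rewrite !inE /= => out1 out2 E12.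
  by move: out1; rewrite E12 => /outgoing_inj /(_ out2) ->.
have targeted_bpair : [set p | targeted p] \subset [set p | bpair F ev p].
  apply/subsetP => p; rewrite !inE => /existsP [tau /and3P [_ bedge_p _]].
  by rewrite /bpair (bedge_rel2 bedge_p) (bedge_undef bedge_p).
have -> : free_pairs = [set p | bpair F ev p] :\: [set p | targeted p].
  by apply/setP => p; rewrite !inE andbC.
by rewrite cardsD (setIidPr targeted_bpair) card_btriple card_targeted.
Qed.

End SolvedState.

Section PointMatrix.
Variables (C : fieldType) (Q0 Q1 : finType) (src tgt : Q1 -> Q0).
Variables (d : nat) (F : 'I_d -> Q0) (mu : Q1 -> 'I_d -> 'I_d -> C).
Variable beta : {set 'I_d}.

Local Notation rel2 := (Defs.rel2 F).
Local Notation Gamma1 := (Defs.Gamma1 src tgt F mu).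
Local Notation mu_eff := (Defs.mu_eff src tgt F mu).
Local Notation evalW := (evalW src tgt F mu).
Local Notation actM := (Defs.actM src tgt F mu).
Local Notation e := #|beta|.

Definition point_mx (W : pairT d -> C) : 'M[C]_(e, d) := \matrix_(k, i) W (i, enum_val k).

Definition normalized (Y : 'M[C]_(e, d)) := forall k (l : 'I_e), Y k (enum_val l) = (k == l)%:R.

Lemma Gamma1_mu_eff v i j : (if Gamma1 v i j then mu v i j else 0) = mu_eff v i j.
Proof.
rewrite /Defs.Gamma1 /Defs.mu_eff.
by case: (F i == src v); case: (F j == tgt v) => //=; case: eqP.
Qed.

Lemma evalW_beta (W : pairT d -> C) v t s :
  (forall p, ~~ rel2 p -> W p = 0) -> (forall i j, j \notin beta -> W (i, j) = 0) ->
  evalW W (v, t, s) =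
  \sum_(l < e) (\sum_i W (i, s) * mu_eff v i (enum_val l)) * W (t, enum_val l)
  - \sum_i W (i, s) * mu_eff v i t.
Proof.
move=> W_Nrel2 W_Nbeta; rewrite evalWE; congr (_ - _); last first.
  apply: eq_bigr => s' _; rewrite -Gamma1_mu_eff.
  have [rel2_s's|/W_Nrel2 ->] := boolP (rel2 (s', s)); last by rewrite andbF mul0r.
  by rewrite andbT; case: (Gamma1 v s' t); rewrite ?mulr0 // mulrC.
have termE s' t' :
  (if [&& Gamma1 v s' t', rel2 (t, t') & rel2 (s', s)]
   then mu v s' t' * (W (t, t') * W (s', s)) else 0) =
  W (s', s) * mu_eff v s' t' * W (t, t').
  rewrite -Gamma1_mu_eff.
  have [rel2_tt'|/W_Nrel2 ->] := boolP (rel2 (t, t')); last by rewrite andbF mulr0.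
  have [rel2_s's|/W_Nrel2 ->] := boolP (rel2 (s', s)); last by rewrite !andbF !mul0r.
  by rewrite !andbT; case: (Gamma1 v s' t'); [ring | rewrite mulr0 mul0r].
under eq_bigr do under eq_bigr do rewrite termE.
rewrite exchange_big /=.
under eq_bigr do rewrite -mulr_suml.
rewrite (bigID (fun t' => t' \in beta)) /= [X in _ + X]big1 ?addr0; last first.
  by move=> t' Nbeta_t'; rewrite W_Nbeta // mulr0.
by rewrite big_enum_val.
Qed.

Lemma mul_projM (m : nat) (Y : 'M[C]_(m, d)) p k c :
  (Y *m projM C F p) k c = Y k c * (F c == p)%:R.
Proof.
rewrite mxE (bigD1 c) //= big1 ?addr0; first by rewrite mxE eqxx.
by move=> i /negbTE i_neq_c; rewrite mxE i_neq_c mulr0.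
Qed.

Lemma mul_actM (m : nat) (Y : 'M[C]_(m, d)) v k t :
  (Y *m actM v) k t = \sum_i Y k i * mu_eff v i t.
Proof. by rewrite mxE; apply: eq_bigr => i _; rewrite mxE. Qed.

Lemma normalized_mul (D : 'M[C]_e) (Y : 'M[C]_(e, d)) k (l : 'I_e) :
  normalized Y -> (D *m Y) k (enum_val l) = D k l.
Proof.
move=> Y_norm; rewrite mxE (bigD1 l) //= Y_norm eqxx mulr1 big1 ?addr0 //.
by move=> r /negbTE r_neq_l; rewrite Y_norm r_neq_l mulr0.
Qed.

Lemma point_mx_proj W p : (forall q, ~~ rel2 q -> W q = 0) ->
  (point_mx W *m projM C F p <= point_mx W)%MS.
Proof.
move=> W_Nrel2; apply/submxP.
exists (\matrix_(k, l) ((k == l) && (F (enum_val k) == p))%:R).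
apply/matrixP => k c; rewrite mul_projM [RHS]mxE (bigD1 k) //= big1 ?addr0; last first.
  by move=> l /negbTE l_neq_k; rewrite mxE eq_sym l_neq_k mul0r.
rewrite !mxE eqxx /=.
have [/andP [/eqP -> _]|/W_Nrel2 ->] := boolP (rel2 (c, enum_val k)); last by rewrite !mul0r mulr0.
by rewrite mulrC.
Qed.

(* [E(v, t, enum_val k) = 0] for all [t] says that row [k] times [M_v] is the
   combination of the rows whose coefficients are its own [beta]-entries. *)
Lemma point_mx_act W v :
  (forall q, ~~ rel2 q -> W q = 0) -> (forall i j, j \notin beta -> W (i, j) = 0) ->
  (forall t (k : 'I_e), evalW W (v, t, enum_val k) = 0) ->
  (point_mx W *m actM v <= point_mx W)%MS.
Proof.
move=> W_Nrel2 W_Nbeta W_eq; apply/submxP.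
exists (\matrix_(k, l) (point_mx W *m actM v) k (enum_val l)).
apply/matrixP => k t; rewrite mul_actM mxE.
move/eqP: (W_eq t k); rewrite (evalW_beta _ _ _ W_Nrel2 W_Nbeta) subr_eq0 => /eqP eq_kt.
under eq_bigr do rewrite mxE; rewrite -eq_kt.
apply: eq_bigr => l _; rewrite !mxE.
by congr (_ * _); apply: eq_bigr => i _; rewrite !mxE.
Qed.

Lemma act_evalW (Y : 'M[C]_(e, d)) W v t (k : 'I_e) :
  normalized Y -> (Y *m actM v <= Y)%MS ->
  (forall q, ~~ rel2 q -> W q = 0) -> (forall i j, j \notin beta -> W (i, j) = 0) ->
  (forall (k : 'I_e) i, W (i, enum_val k) = Y k i) ->
  evalW W (v, t, enum_val k) = 0.
Proof.
move=> Y_norm /submxP [D YD] W_Nrel2 W_Nbeta WY.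
rewrite (evalW_beta _ _ _ W_Nrel2 W_Nbeta); apply/eqP; rewrite subr_eq0; apply/eqP.
have Dkl l : D k l = \sum_i W (i, enum_val k) * mu_eff v i (enum_val l).
  by rewrite -(normalized_mul D k l Y_norm) -YD mul_actM; under [RHS]eq_bigr do rewrite WY.
have : (Y *m actM v) k t = (D *m Y) k t by rewrite YD.
rewrite mul_actM mxE => YDkt.
rewrite (eq_bigr (fun i => Y k i * mu_eff v i t)) => [|i _]; last by rewrite WY.
by rewrite YDkt; apply: eq_bigr => l _; rewrite Dkl WY.
Qed.

Lemma normalized_proj_zero (Y : 'M[C]_(e, d)) (k : 'I_e) i :
  normalized Y -> (Y *m projM C F (F i) <= Y)%MS -> F i != F (enum_val k) -> Y k i = 0.
Proof.
move=> Y_norm /submxP [D YD] Fi_neq.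
have Dkl (l : 'I_e) : D k l = (k == l)%:R * (F (enum_val l) == F i)%:R.
  by rewrite -(normalized_mul D k l Y_norm) -YD mul_projM Y_norm.
have : (Y *m projM C F (F i)) k i = (D *m Y) k i by rewrite YD.
rewrite mul_projM eqxx mulr1 mxE => ->.
rewrite (bigD1 k) //= big1 ?addr0.
  by rewrite Dkl eqxx eq_sym (negbTE Fi_neq) mulr0 mul0r.
by move=> l /negbTE l_neq_k; rewrite Dkl eq_sym l_neq_k !mul0r.
Qed.

End PointMatrix.

Section IncreasingEnumeration.
Variable d : nat.

Definition bseq (b : {set 'I_d}) : seq nat := map val (enum b).

Lemma bseq_sorted (b : {set 'I_d}) : sorted ltn (bseq b).
Proof.
rewrite /bseq sorted_map /enum_mem; apply: sorted_filter; first exact: ltn_trans.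
by rewrite -sorted_map -enumT val_enum_ord iota_ltn_sorted.
Qed.

Lemma size_bseq (b : {set 'I_d}) : size (bseq b) = #|b|.
Proof. by rewrite size_map cardE. Qed.

Lemma nth_bseq_mono (b : {set 'I_d}) i j : (i <= j)%N -> (j < #|b|)%N ->
  (nth 0 (bseq b) i <= nth 0 (bseq b) j)%N.
Proof.
move=> le_ij lt_j; have := bseq_sorted b; rewrite ltn_sorted_uniq_leq => /andP [_ le_sorted].
by apply: (sorted_leq_nth leq_trans leqnn 0 le_sorted) => //;
  rewrite inE size_bseq ?(leq_ltn_trans le_ij).
Qed.

Lemma nth_bseq (b : {set 'I_d}) (l : 'I_#|b|) : nth 0%N (bseq b) l = enum_val l.
Proof. by rewrite /bseq (nth_map (enum_default l)) // -cardE. Qed.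

Lemma bseq_inj : injective bseq.
Proof. by move=> b1 b2 /(inj_map val_inj) E; apply/setP => x; rewrite -mem_enum E mem_enum. Qed.

Lemma count_bseq (b : {set 'I_d}) (P : pred nat) :
  count P (bseq b) = #|[set x in b | P (val x)]|.
Proof.
rewrite /bseq count_map cardsE cardE /enum_mem count_filter size_filter.
by apply: eq_count => x; rewrite /= andbC.
Qed.

Lemma count_lt_nth_sorted (s : seq nat) l : sorted ltn s -> (l < size s)%N ->
  count (fun x => x < nth 0 s l)%N s = l.
Proof.
elim: s l => [|x s IHs] l //= s_sorted lt_l.
have x_min : all (ltn x) s := order_path_min ltn_trans s_sorted.
case: l lt_l => [|l] lt_l /=.
  rewrite ltnn add0n; apply/eqP; rewrite -leqn0 leqNgt -has_count.
  by apply/hasP => -[y /(allP x_min) /= lt_xy]; rewrite ltnNge ltnW.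
have lt_x : (x < nth 0 s l)%N by apply: (allP x_min); apply: mem_nth.
by rewrite lt_x IHs //; apply: path_sorted s_sorted.
Qed.

Lemma count_le_nth_sorted (s : seq nat) l : sorted ltn s -> (l < size s)%N ->
  count (fun x => x <= nth 0 s l)%N s = l.+1.
Proof.
elim: s l => [|x s IHs] l //= s_sorted lt_l.
have x_min : all (ltn x) s := order_path_min ltn_trans s_sorted.
case: l lt_l => [|l] lt_l /=.
  rewrite leqnn add1n; congr _.+1; apply/eqP; rewrite -leqn0 leqNgt -has_count.
  by apply/hasP => -[y /(allP x_min) /= lt_xy]; rewrite leqNgt lt_xy.
have lt_x : (x < nth 0 s l)%N by apply: (allP x_min); apply: mem_nth.
by rewrite (ltnW lt_x) IHs //; apply: path_sorted s_sorted.
Qed.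

Lemma bnth_le_of_count (b1 b2 : {set 'I_d}) : #|b1| = #|b2| ->
  (forall c : nat, count (fun y => y <= c) (bseq b2) <= count (fun y => y <= c) (bseq b1))%N ->
  forall l, (l < #|b1|)%N -> (bnth b1 l <= bnth b2 l)%N.
Proof.
move=> eq_card count_le l lt_l; rewrite leqNgt; apply/negP => lt_bnth.
have := count_le (nth 0 (bseq b2) l).
rewrite count_le_nth_sorted ?bseq_sorted ?size_bseq -?eq_card //.
have : (count (fun x => x <= nth 0 (bseq b2) l) (bseq b1) <=
        count (fun x => x < nth 0 (bseq b1) l) (bseq b1))%N.
  by apply: sub_count => x /= le_x; apply: leq_ltn_trans le_x lt_bnth.
rewrite count_lt_nth_sorted ?bseq_sorted ?size_bseq // => le_l lt_count.
by move: (leq_trans lt_count le_l); rewrite ltnn.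
Qed.

Definition exchange (b : {set 'I_d}) (i j : 'I_d) := i |: (b :\ j).

Lemma card_exchange (b : {set 'I_d}) i j : j \in b -> i \notin b -> #|exchange b i j| = #|b|.
Proof. by move=> bj Nbi; rewrite cardsU1 !inE (negbTE Nbi) andbF add1n (cardsD1 j b) bj. Qed.

Lemma ble_exchange (b : {set 'I_d}) (i j : 'I_d) :
  j \in b -> i \notin b -> (j < i)%N -> ble b (exchange b i j).
Proof.
move=> bj Nbi lt_ji; have card_ex := esym (card_exchange bj Nbi).
rewrite /ble card_ex eqxx /=; apply/forallP => l.
apply: bnth_le_of_count; rewrite ?card_ex // => c; rewrite !count_bseq.
have [le_ic|lt_ci] := leqP i c; last first.
  apply: subset_leq_card; apply/subsetP => x; rewrite !inE.
  by case: eqP => [->|_] /=; [rewrite leqNgt lt_ci | case/andP => /andP [_ ->] ->].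
have le_jc : (j <= c)%N := leq_trans (ltnW lt_ji) le_ic.
have -> : [set x in exchange b i j | (val x <= c)%N] = i |: ([set x in b | (val x <= c)%N] :\ j).
  by apply/setP => x; rewrite !inE; case: eqP => [->|_] /=; [rewrite le_ic | rewrite andbA].
rewrite cardsU1 !inE (negbTE Nbi) andbF add1n.
by rewrite [X in (_ <= X)%N](cardsD1 j) !inE bj le_jc.
Qed.

End IncreasingEnumeration.

Lemma card_ord_lt n m : (m <= n)%N -> #|[set k : 'I_n | (k < m)%N]| = m.
Proof.
move=> le_mn.
have -> : [set k : 'I_n | (k < m)%N] = [set widen_ord le_mn x | x : 'I_m].
  apply/setP => k; rewrite inE; apply/idP/imsetP => [lt_km|[x _ ->]]; last by rewrite /= ltn_ord.
  by exists (Ordinal lt_km) => //; apply: val_inj.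
rewrite card_imset ?card_ord //.
by move=> x y /(congr1 val) /= /val_inj.
Qed.

Lemma perm_exists_le_ge n (s : 'S_n) (l : 'I_n) : exists k : 'I_n, (k <= l <= s k)%N.
Proof.
case: (pickP (fun k : 'I_n => (k <= l <= s k)%N)) => [k ok|none]; first by exists k.
have sub_lt : s @: [set k : 'I_n | (k < l.+1)%N] \subset [set k : 'I_n | (k < l)%N].
  apply/subsetP => y /imsetP [k]; rewrite !inE ltnS => le_kl ->.
  by move: (none k); rewrite le_kl /= => /negbT; rewrite -ltnNge.
move: (subset_leq_card sub_lt); rewrite card_imset; last exact: perm_inj.
by rewrite !card_ord_lt ?ltnn // ltnW.
Qed.

Section PlueckerCoordinates.
Variables (C : fieldType) (d : nat).

Lemma onth_enum_val (b : {set 'I_d}) (l : 'I_#|b|) : onth (enum b) l = Some (enum_val l).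
Proof. by rewrite onthE (nth_map (enum_default l)) // -cardE ltn_ord. Qed.

Lemma Pl_mulmx (e : nat) (A : 'M[C]_e) (X : 'M[C]_(e, d)) b :
  Pl (A *m X) b = \det A * Pl X b.
Proof.
rewrite /Pl -det_mulmx; congr (\det _); apply/matrixP => k l; rewrite !mxE.
under [RHS]eq_bigr do rewrite mxE.
case: (onth (enum b) l) => [c|] /=; first by rewrite mxE.
by rewrite big1 // => r _; rewrite mulr0.
Qed.

Variable beta : {set 'I_d}.
Local Notation e := #|beta|.

Lemma Pl_normalized (Y : 'M[C]_(e, d)) : normalized Y -> Pl Y beta = 1.
Proof.
move=> Y_norm; rewrite -(det1 C e) /Pl; congr (\det _); apply/matrixP => k l.
by rewrite !mxE onth_enum_val /= Y_norm.
Qed.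

Lemma blt_witness b' : blt beta b' -> exists l : 'I_e, (bnth beta l < bnth b' l)%N.
Proof.
case/andP => /andP [/eqP eq_card /forallP le_b'] neq_b'.
case: (pickP (fun l : 'I_e => (bnth beta l < bnth b' l)%N)) => [l lt_l|none]; first by exists l.
case/eqP: neq_b'; apply: bseq_inj; apply: (@eq_from_nth _ 0%N); rewrite !size_bseq // => l lt_l.
apply/eqP; rewrite eqn_leq (le_b' (Ordinal lt_l)) /=.
by move: (none (Ordinal lt_l)) => /negbT; rewrite -leqNgt.
Qed.

(* Every term of the Leibniz expansion contains an entry [Y k i] with [i]
   beyond the [k]-th element of [beta]. *)
Lemma Pl_blt_eq0 (Y : 'M[C]_(e, d)) b' :
  (forall (k : 'I_e) (i : 'I_d), (enum_val k < i)%N -> Y k i = 0) ->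
  blt beta b' -> Pl Y b' = 0.
Proof.
move=> Y_upper lt_b'; have [l lt_l] := blt_witness lt_b'.
have eq_card : #|b'| = e by case/andP: lt_b' => /andP [/eqP]. 
rewrite /Pl /determinant big1 // => s _.
have [k /andP [le_kl le_lsk]] := perm_exists_le_ge s l.
rewrite (bigD1 k) //= mxE.
case E: (onth (enum b') (s k)) => [c|] /=; last by rewrite mul0r mulr0.
rewrite Y_upper ?mul0r ?mulr0 //.
have lt_sk : (s k < size (enum b'))%N by rewrite -cardE eq_card.
have -> : val c = nth 0%N (bseq b') (s k) by rewrite /bseq (nth_map c) // (@onth_nth _ c c _ _ E).
rewrite -nth_bseq; apply: (leq_ltn_trans (nth_bseq_mono le_kl (ltn_ord l))).
by apply: (leq_trans lt_l); apply: nth_bseq_mono => //; rewrite eq_card.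
Qed.

End PlueckerCoordinates.

Definition exchange_point (C : fieldType) (d : nat) (beta : {set 'I_d}) (i j : 'I_d) :
  'M[C]_(#|beta|, d) :=
  \matrix_(r, c) ((c == enum_val r) || ((enum_val r == j) && (c == i)))%:R.

Section ExchangeMinor.
Variables (C : fieldType) (d : nat) (beta : {set 'I_d}) (i j : 'I_d).
Hypotheses (beta_j : j \in beta) (Nbeta_i : i \notin beta).
Local Notation e := #|beta|.
Local Notation ex := (exchange beta i j).
Local Notation Ex := (exchange_point C beta i j).

Lemma size_enum_exchange : size (enum ex) = e.
Proof. by rewrite -cardE card_exchange. Qed.

Lemma index_exchange_lt : (index i (enum ex) < e)%N.
Proof. by rewrite -size_enum_exchange index_mem mem_enum !inE eqxx. Qed.

Definition pos_i : 'I_e := Ordinal index_exchange_lt.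

Definition ex_col (l : 'I_e) : 'I_d := nth i (enum ex) l.

Lemma onth_ex_col (l : 'I_e) : onth (enum ex) l = Some (ex_col l).
Proof. by rewrite onthE (nth_map i) // size_enum_exchange. Qed.

Lemma ex_col_pos_i : ex_col pos_i = i.
Proof. by rewrite /ex_col /= nth_index // mem_enum !inE eqxx. Qed.

Lemma ex_col_beta (l : 'I_e) : l != pos_i -> (ex_col l \in beta) && (ex_col l != j).
Proof.
move=> l_neq.
have ex_l : ex_col l \in ex by rewrite -mem_enum /ex_col mem_nth // size_enum_exchange.
have col_neq_i : ex_col l != i.
  apply: contra_neq l_neq => col_i; apply: val_inj => /=.
  by rewrite -[X in index X _]col_i /ex_col index_uniq ?enum_uniq // size_enum_exchange.
by move: ex_l; rewrite !inE (negbTE col_neq_i) /= andbC.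
Qed.

Definition row_j : 'I_e := enum_rank_in beta_j j.

Definition ex_row (l : 'I_e) : 'I_e :=
  if l == pos_i then row_j else enum_rank_in beta_j (ex_col l).

Definition ex_minor (Y : 'M[C]_(e, d)) : 'M[C]_e :=
  \matrix_(k, l) oapp (Y k) 0 (onth (enum ex) l).

Lemma ex_minorE (Y : 'M[C]_(e, d)) (k l : 'I_e) : ex_minor Y k l = Y k (ex_col l).
Proof. by rewrite mxE onth_ex_col. Qed.

Lemma normalized_ex_col (Y : 'M[C]_(e, d)) (k l : 'I_e) : normalized Y ->
  Y k (ex_col l) = if l == pos_i then Y k i else (k == ex_row l)%:R.
Proof.
move=> Y_norm; have [->|l_neq] := eqVneq l pos_i; first by rewrite ex_col_pos_i.
rewrite /ex_row (negbTE l_neq); case/andP: (ex_col_beta l_neq) => beta_l _.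
by rewrite -{1}(enum_rankK_in beta_j beta_l) Y_norm.
Qed.

Lemma enum_val_neq_i (k : 'I_e) : (enum_val k == i) = false.
Proof. by apply: contraNF Nbeta_i => /eqP <-; apply: enum_valP. Qed.

Lemma exchange_point_normalized (j' : 'I_d) : normalized (exchange_point C beta i j').
Proof.
move=> k l; rewrite mxE enum_val_neq_i andbF orbF.
by rewrite eq_sym (inj_eq enum_val_inj).
Qed.

Lemma exchange_point_i (j' : 'I_d) (k : 'I_e) :
  exchange_point C beta i j' k i = (enum_val k == j')%:R.
Proof. by rewrite mxE eq_sym enum_val_neq_i eqxx andbT. Qed.

Definition ex_cof (r : 'I_e) := cofactor (ex_minor Ex) r pos_i.

Lemma cofactor_ex_minor (Y : 'M[C]_(e, d)) (r : 'I_e) :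
  normalized Y -> cofactor (ex_minor Y) r pos_i = ex_cof r.
Proof.
move=> Y_norm; have Ex_norm := exchange_point_normalized j.
rewrite /ex_cof /cofactor; congr (_ * \det _); apply/matrixP => a b.
by rewrite !mxE !onth_ex_col /= !normalized_ex_col // eq_sym (negbTE (neq_lift _ _)).
Qed.

Lemma det_ex_minor (Y : 'M[C]_(e, d)) :
  normalized Y -> \det (ex_minor Y) = \sum_r Y r i * ex_cof r.
Proof.
move=> Y_norm; rewrite (expand_det_col _ pos_i); apply: eq_bigr => r _.
by rewrite cofactor_ex_minor // ex_minorE ex_col_pos_i.
Qed.

(* With the extra entry moved to row [r], the columns [i] and [enum_val r] of
   the minor coincide, while its determinant is still [ex_cof r]. *)
Lemma ex_cof_eq0 (r : 'I_e) : r != row_j -> ex_cof r = 0.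
Proof.
move=> r_neq; pose Er := exchange_point C beta i (enum_val r).
have detE : \det (ex_minor Er) = ex_cof r.
  rewrite det_ex_minor; last exact: exchange_point_normalized (enum_val r).
  rewrite (bigD1 r) //= exchange_point_i eqxx mul1r big1 ?addr0 // => r' r'_neq.
  by rewrite exchange_point_i (inj_eq enum_val_inj) (negbTE r'_neq) mul0r.
have ex_r : enum_val r \in ex.
  rewrite !inE (enum_valP r) andbT orbC -(enum_rankK_in beta_j beta_j).
  by rewrite (inj_eq enum_val_inj) r_neq.
have lt_r : (index (enum_val r) (enum ex) < e)%N.
  by rewrite -size_enum_exchange index_mem mem_enum.
pose l1 : 'I_e := Ordinal lt_r.
have col_l1 : ex_col l1 = enum_val r by rewrite /ex_col /= nth_index // mem_enum.
have pos_neq : pos_i != l1.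
  by apply/eqP => pos_l1; move/eqP: col_l1; rewrite -pos_l1 ex_col_pos_i eq_sym enum_val_neq_i.
rewrite -detE -det_tr; apply: (determinant_alternate pos_neq) => k.
rewrite !mxE !onth_ex_col /= ex_col_pos_i col_l1 exchange_point_i mxE.
by rewrite enum_val_neq_i andbF orbF eq_sym (inj_eq enum_val_inj).
Qed.

Lemma Pl_exchange (Y : 'M[C]_(e, d)) : normalized Y -> Pl Y ex = ex_cof row_j * Y row_j i.
Proof.
move=> Y_norm; rewrite -[Pl Y ex]/(\det (ex_minor Y)) det_ex_minor //.
rewrite (bigD1 row_j) //= big1 ?addr0 1?mulrC // => r r_neq.
by rewrite ex_cof_eq0 // mulr0.
Qed.

Lemma Pl_exchange_point : Pl Ex ex = ex_cof row_j.
Proof.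
rewrite Pl_exchange ?exchange_point_i ?enum_rankK_in ?eqxx ?mulr1 //.
exact: exchange_point_normalized.
Qed.

Lemma ex_row_inj : injective ex_row.
Proof.
have val_row_j : enum_val row_j = j by rewrite enum_rankK_in.
move=> l l'; rewrite /ex_row.
have [->|l_neq] := eqVneq l pos_i; have [->|l'_neq] := eqVneq l' pos_i => //.
- move/(congr1 enum_val); case/andP: (ex_col_beta l'_neq) => beta_l' col_neq_j.
  by rewrite val_row_j enum_rankK_in // => col_j; rewrite col_j eqxx in col_neq_j.
- move/(congr1 enum_val); case/andP: (ex_col_beta l_neq) => beta_l col_neq_j.
  by rewrite val_row_j enum_rankK_in // => col_j; rewrite col_j eqxx in col_neq_j.
move/(congr1 enum_val); rewrite !enum_rankK_in ?(andP (ex_col_beta l_neq)).1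
  ?(andP (ex_col_beta l'_neq)).1 // => /eqP.
by rewrite /ex_col nth_uniq ?enum_uniq ?size_enum_exchange // => /eqP /val_inj.
Qed.

Lemma Pl_exchange_point_neq0 : Pl Ex ex != 0.
Proof.
have Ex_norm := exchange_point_normalized j.
rewrite -[Pl Ex ex]/(\det (ex_minor Ex)); have -> : ex_minor Ex = (perm_mx (perm ex_row_inj))^T.
  apply/matrixP => k l; rewrite ex_minorE normalized_ex_col // !mxE permE.
  case: eqP => [->|_]; last by rewrite eq_sym.
  rewrite eq_sym enum_val_neq_i eqxx andbT /ex_row eqxx eq_sym.
  by rewrite -{1}(enum_rankK_in beta_j beta_j) (inj_eq enum_val_inj).
by rewrite det_tr det_perm signr_eq0.
Qed.

Lemma Pl_exchange_ratio (Y : 'M[C]_(e, d)) : normalized Y ->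
  Pl Y ex / Pl Ex ex = Y (enum_rank_in beta_j j) i.
Proof.
move=> Y_norm; have cof_neq0 := Pl_exchange_point_neq0.
by rewrite Pl_exchange_point in cof_neq0 *; rewrite (Pl_exchange Y_norm) mulrC mulKf.
Qed.

End ExchangeMinor.

Lemma partial_eval_of_solution (C : fieldType) (Q0 Q1 : finType) (src tgt : Q1 -> Q0)
    (d : nat) (F : 'I_d -> Q0) (mu : Q1 -> 'I_d -> 'I_d -> C) (W : pairT d -> C) :
  (forall p, ~~ rel2 F p -> W p = 0) -> (forall tau, evalW src tgt F mu W tau = 0) ->
  partial_eval src tgt F mu (fun p => if rel2 F p then Some (W p) else None).
Proof.
move=> W_Nrel2 W_eq; split=> [p|tau p _ /and3P [_ rel2_p _] _]; first by case: (rel2 F p).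
split; first by rewrite rel2_p.
rewrite -(W_eq tau); apply: eq_bigr => m _; congr (_ * _); apply: eq_bigr => q _.
by case: (boolP (rel2 F q)) => //= /W_Nrel2 ->.
Qed.

Section SchubertCell.
Variables (C : fieldType) (Q0 Q1 : finType) (src tgt : Q1 -> Q0).
Variables (d : nat) (F : 'I_d -> Q0) (mu : Q1 -> 'I_d -> 'I_d -> C).
Variables (beta : {set 'I_d}) (ev : pevT C d).
Hypothesis ev_beta : is_ev_beta src tgt F mu beta ev.

Local Notation e := #|beta|.
Local Notation rel2 := (Defs.rel2 F).
Local Notation rel3 := (Defs.rel3 src tgt F mu).
Local Notation evalW := (evalW src tgt F mu).
Local Notation is_point := (is_point src tgt F mu ev).
Local Notation cellM := (@cellM C Q0 Q1 src tgt d F mu beta).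

Lemma ev_f_beta p c : f_beta C F beta p = Some c -> ev p = Some c.
Proof. by case: ev_beta => _ ext _ f_p; rewrite -f_p; apply: ext; rewrite f_p. Qed.

Lemma point_in_beta W i j : is_point W -> i \in beta -> W (i, j) = (i == j)%:R.
Proof.
case=> W_Nrel2 W_ev _ beta_i; have [rel2_ij|Nrel2_ij] := boolP (rel2 (i, j)).
  have f_ij : f_beta C F beta (i, j) = Some (if i == j then 1 else 0).
    by rewrite /f_beta rel2_ij /= beta_i.
  by rewrite (W_ev _ _ (ev_f_beta f_ij)); case: (i == j).
rewrite W_Nrel2 //; case: eqP Nrel2_ij => // <-.
by rewrite /Defs.rel2 /= eqxx leqnn.
Qed.

Lemma point_notin_beta W i j : is_point W -> j \notin beta -> W (i, j) = 0.
Proof.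
case=> W_Nrel2 W_ev _ Nbeta_j; have [rel2_ij|/W_Nrel2 //] := boolP (rel2 (i, j)).
apply: W_ev; apply: ev_f_beta; rewrite /f_beta rel2_ij /= Nbeta_j.
by case: ifP => // beta_i; case: eqP => // ij; rewrite -ij beta_i in Nbeta_j.
Qed.

Lemma point_mx_normalized W : is_point W -> normalized (point_mx beta W).
Proof.
move=> W_point k l; rewrite mxE point_in_beta ?enum_valP //.
by rewrite eq_sym (inj_eq enum_val_inj).
Qed.

Lemma point_mx_cell W : is_point W -> cellM (point_mx beta W).
Proof.
move=> W_point; have W_norm := point_mx_normalized W_point.
case: (W_point) => W_Nrel2 _ W_eq; split.
- by rewrite Pl_normalized // oner_eq0.
- move=> b' lt_b'; apply: Pl_blt_eq0 lt_b' => k i lt_ki; rewrite mxE W_Nrel2 //.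
  by rewrite /Defs.rel2 /= negb_and -ltnNge lt_ki orbT.
split=> [p|v]; first exact: point_mx_proj.
apply: point_mx_act => // [i j|t k]; first exact: point_notin_beta.
by have [/W_eq|/evalW_nonrel3 ->] := boolP (rel3 (v, t, enum_val k)).
Qed.

Lemma cell_normalize (X : 'M[C]_(e, d)) : cellM X ->
  exists2 Y : 'M[C]_(e, d), normalized Y /\ cellM Y & (Y == X)%MS /\ ratios Y =1 ratios X.
Proof.
case=> Pl_neq0 Pl_blt [X_proj X_act].
pose Xb : 'M[C]_e := \matrix_(k, l) X k (enum_val l).
have PlX : Pl X beta = \det Xb.
  by rewrite /Pl; congr (\det _); apply/matrixP => k l; rewrite !mxE onth_enum_val.
have Xb_unit : Xb \in unitmx by rewrite unitmxE unitfE -PlX.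
have detV_neq0 : \det (invmx Xb) != 0 by rewrite det_inv invr_eq0 -PlX.
pose Y := invmx Xb *m X.
have PlY b : Pl Y b = \det (invmx Xb) * Pl X b by rewrite Pl_mulmx.
have XY : (X <= Y)%MS by rewrite -[X](mulKVmx Xb_unit) submxMl.
have stable_Y A : (X *m A <= X)%MS -> (Y *m A <= Y)%MS.
  by move=> XA; rewrite -mulmxA (submx_trans (submxMl _ _) (submx_trans XA XY)).
have mulX_beta (A : 'M[C]_e) k l : (A *m X) k (enum_val l) = (A *m Xb) k l.
  by rewrite !mxE; apply: eq_bigr => r _; rewrite mxE.
exists Y; split.
- by move=> k l; rewrite mulX_beta mulVmx // mxE.
- split; [by rewrite PlY mulf_neq0 | by move=> b' /Pl_blt; rewrite PlY => ->; rewrite mulr0 |].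
  by split=> [p|v]; apply: stable_Y.
- by rewrite submxMl XY.
move=> b; rewrite /ratios; case: ifP => // _.
by rewrite !PlY invfM mulrACA mulfV // mul1r.
Qed.

Lemma ev_agrees_with_solution W :
  (forall p, ~~ rel2 p -> W p = 0) -> (forall tau, evalW W tau = 0) ->
  (forall p c, f_beta C F beta p = Some c -> W p = c) ->
  forall p c, ev p = Some c -> W p = c.
Proof.
move=> W_Nrel2 W_eq W_f p c ev_p; case: ev_beta => _ _ ev_min.
have ext : extends (f_beta C F beta) (fun q => if rel2 q then Some (W q) else None).
  move=> q; case f_q: (f_beta C F beta q) => [c'|] // _.
  have rel2_q : rel2 q by move: f_q; rewrite /f_beta; case: (rel2 q).
  by rewrite rel2_q (W_f _ _ f_q).
move: (ev_min _ (partial_eval_of_solution W_Nrel2 W_eq) ext p).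
by rewrite ev_p /=; case: (rel2 p) => /(_ isT) // [].
Qed.

(* The entry [Y k i] with [i] beyond [j := enum_val k] is, up to a nonzero
   constant, the Pluecker coordinate of the exchanged set [i |: beta :\ j],
   which is larger than [beta]. *)
Lemma normalized_cell_upper (Y : 'M[C]_(e, d)) : normalized Y -> cellM Y ->
  forall (k : 'I_e) (i : 'I_d), (enum_val k < i)%N -> Y k i = 0.
Proof.
move=> Y_norm [_ Pl_blt _] k i lt_ki; have [beta_i|Nbeta_i] := boolP (i \in beta).
  rewrite -(enum_rankK_in beta_i beta_i) Y_norm; case: eqP => // ki.
  by move: lt_ki; rewrite ki enum_rankK_in // ltnn.
have beta_j := enum_valP k.
rewrite -[k](enum_valK_in beta_j) -(Pl_exchange_ratio beta_j Nbeta_i Y_norm) Pl_blt ?mul0r //.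
rewrite /blt ble_exchange //=; apply: contraNneq Nbeta_i => ->.
by rewrite !inE eqxx.
Qed.

Lemma normalized_cell_support (Y : 'M[C]_(e, d)) (k : 'I_e) i :
  normalized Y -> cellM Y -> ~~ rel2 (i, enum_val k) -> Y k i = 0.
Proof.
move=> Y_norm Y_cell; rewrite /Defs.rel2 negb_and => /orP [F_neq|/= lt_ki].
  by case: Y_cell => _ _ [Y_proj _]; apply: normalized_proj_zero.
by apply: normalized_cell_upper; rewrite // ltnNge.
Qed.

Definition mx_point (Y : 'M[C]_(e, d)) : pairT d -> C :=
  fun p => oapp (fun k => Y k p.1) 0 [pick k : 'I_e | enum_val k == p.2].

Lemma mx_pointE (Y : 'M[C]_(e, d)) k i : mx_point Y (i, enum_val k) = Y k i.
Proof. by rewrite /mx_point /= pick_enum_val. Qed.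

Lemma mx_point_notin_beta (Y : 'M[C]_(e, d)) i j : j \notin beta -> mx_point Y (i, j) = 0.
Proof. by move=> Nbeta_j; rewrite /mx_point /= pick_enum_val_notin. Qed.

Lemma point_mx_mx_point (Y : 'M[C]_(e, d)) : point_mx beta (mx_point Y) = Y.
Proof. by apply/matrixP => k i; rewrite mxE mx_pointE. Qed.

Lemma mx_point_f_beta (Y : 'M[C]_(e, d)) : normalized Y ->
  forall p c, f_beta C F beta p = Some c -> mx_point Y p = c.
Proof.
move=> Y_norm [i j]; rewrite /f_beta /=; case: (rel2 (i, j)) => //=.
have [beta_i|Nbeta_i] := boolP (i \in beta).
  move=> c [<-]; have [beta_j|Nbeta_j] := boolP (j \in beta).
    rewrite -(enum_rankK_in beta_j beta_j) mx_pointE -{1}(enum_rankK_in beta_i beta_i).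
    by rewrite Y_norm -(inj_eq enum_val_inj) !enum_rankK_in // eq_sym; case: eqP.
  by rewrite mx_point_notin_beta //; case: eqP => // ij; rewrite -ij beta_i in Nbeta_j.
by case: ifP => [Nbeta_j c [<-]|_ c //]; rewrite mx_point_notin_beta.
Qed.

Lemma mx_point_point (Y : 'M[C]_(e, d)) : normalized Y -> cellM Y -> is_point (mx_point Y).
Proof.
move=> Y_norm Y_cell; have W_Nbeta i j := @mx_point_notin_beta Y i j.
have W_Nrel2 p : ~~ rel2 p -> mx_point Y p = 0.
  case: p => i j Nrel2_ij; have [beta_j|/W_Nbeta //] := boolP (j \in beta).
  rewrite -(enum_rankK_in beta_j beta_j) mx_pointE normalized_cell_support //.
  by rewrite enum_rankK_in.
have W_eq tau : evalW (mx_point Y) tau = 0.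
  case: tau => [[v t] s]; have [beta_s|Nbeta_s] := boolP (s \in beta).
    rewrite -(enum_rankK_in beta_s beta_s); case: Y_cell => _ _ [_ Y_act].
    exact: act_evalW Y_norm (Y_act v) W_Nrel2 W_Nbeta (mx_pointE Y).
  have sum_s0 (f : 'I_d -> C) : \sum_i mx_point Y (i, s) * f i = 0.
    by rewrite big1 // => i _; rewrite W_Nbeta // mul0r.
  rewrite (@evalW_beta _ _ _ _ _ _ _ _ beta) // sum_s0 subr0.
  by rewrite big1 // => l _; rewrite sum_s0 mul0r.
split=> //; exact: ev_agrees_with_solution W_Nrel2 W_eq (mx_point_f_beta Y_norm).
Qed.

End SchubertCell.

Section AffineChart.
Variables (C : fieldType) (Q0 Q1 : finType) (src tgt : Q1 -> Q0).
Variables (d : nat) (F : 'I_d -> Q0) (mu : Q1 -> 'I_d -> 'I_d -> C).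
Variables (beta : {set 'I_d}) (ev : pevT C d) (out : tripleT Q1 d -> pairT d -> bool).
Hypothesis ev_beta : is_ev_beta src tgt F mu beta ev.
Hypothesis out_solution : is_solution src tgt F mu ev out.

Local Notation free_pairs := (free_pairs src tgt F mu ev out).
Local Notation n := #|free_pairs|.

Lemma free_pair_exchangeable p : p \in free_pairs -> p.2 \in beta /\ p.1 \notin beta.
Proof.
rewrite inE => /andP [/andP [rel2_p undef_p] _].
have f_p : f_beta C F beta p = None.
  case f_p: (f_beta C F beta p) => [c|] //.
  by move: undef_p; rewrite (ev_f_beta ev_beta f_p).
move: f_p; rewrite /f_beta rel2_p /=.
by case: (p.1 \in beta) => //; case: (p.2 \in beta).
Qed.

Definition free_coord (k : 'I_n) (r : {set 'I_d} -> C) : C :=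
  let: (i, j) := enum_val k in
  r (exchange beta i j) / Pl (exchange_point C beta i j) (exchange beta i j).

Lemma free_coord_polyfun k : polyfun (free_coord k).
Proof. by rewrite /free_coord; case: (enum_val k) => i j; apply: pf_mul (pf_var _ _) (pf_const _ _). Qed.

Lemma free_coord_ratios W k :
  is_point src tgt F mu ev W -> free_coord k (ratios (point_mx beta W)) = W (enum_val k).
Proof.
move=> W_point; have [] := free_pair_exchangeable (enum_valP k); rewrite /free_coord.
case: (enum_val k) => i j /= beta_j Nbeta_i.
have W_norm := point_mx_normalized ev_beta W_point.
rewrite /ratios card_exchange // eqxx Pl_normalized // divr1.
by rewrite (Pl_exchange_ratio beta_j Nbeta_i W_norm) mxE enum_rankK_in.
Qed.

Definition chart (x : 'I_n -> C) : 'M[C]_(#|beta|, d) := point_mx beta (fill x).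

Lemma chart_polyfun k i : polyfun (fun x => chart x k i).
Proof. by apply: (pf_ext (fill_polyfun src tgt F mu ev out (i, enum_val k))) => x; rewrite mxE. Qed.

Lemma chart_cell x : cellM src tgt F mu (chart x).
Proof.
case: ev_beta => ev_partial _ _; rewrite /chart.
exact (point_mx_cell ev_beta (fill_point ev_partial out_solution x)).
Qed.

Lemma free_coord_chart x k : free_coord k (ratios (chart x)) = x k.
Proof.
case: ev_beta => ev_partial _ _.
by rewrite free_coord_ratios ?fill_free //; apply: fill_point.
Qed.

Lemma chart_free_coord (X : 'M[C]_(#|beta|, d)) :
  cellM src tgt F mu X -> (chart (fun k => free_coord k (ratios X)) == X)%MS.
Proof.
case/cell_normalize=> Y [Y_norm Y_cell] [YX ratiosYX].
have Y_point := mx_point_point ev_beta Y_norm Y_cell.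
have coordsE k : mx_point Y (enum_val k) = free_coord k (ratios X).
  rewrite -(free_coord_ratios k Y_point) point_mx_mx_point /free_coord.
  by case: (enum_val k) => i j; rewrite ratiosYX.
suff -> : chart (fun k => free_coord k (ratios X)) = Y by [].
rewrite -[RHS](point_mx_mx_point Y); apply/matrixP => k i.
by rewrite !mxE (point_eq_fill out_solution Y_point coordsE).
Qed.

End AffineChart.

Local Open Scope complex_scope.

Theorem theorem2p19 (R : realType) (Q0 Q1 : finType) (src tgt : Q1 -> Q0)
    (d : nat) (F : 'I_d -> Q0) (mu : Q1 -> 'I_d -> 'I_d -> R[i])
    (beta : {set 'I_d}) (ev : pevT R[i] d) :
  ~ contradictory src tgt F mu beta ->
  is_ev_beta src tgt F mu beta ev ->
  solvable src tgt F mu ev ->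
  affine_of_dim (@cellM _ _ _ src tgt d F mu beta)
    (#|[set p | bpair F ev p]| - #|[set tau | btriple src tgt F mu ev tau]|).
Proof.
(* Non-contradiction is already implied by the existence of [ev]. *)
move=> _ ev_beta [out out_sol]; rewrite -(card_free_pairs out_sol).
exists (fun x => chart beta x), (fun k => free_coord beta k); split.
- exact: chart_polyfun.
- exact: free_coord_polyfun.
- exact: chart_cell ev_beta out_sol.
- exact: free_coord_chart ev_beta out_sol.
- exact: chart_free_coord ev_beta out_sol.
Qed.
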